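(* Let $K, G : \mathrm{Per}(\mathbb{R}) \to \mathrm{Per}(\mathbb{R})$ be continuous mappings which can be approximated smoothly by the parameterized families $K_N$ and $G_N$, respectively (in the sense defined in the context). Let $\lambda \geq 0$ be any real number. Define $KG$, $K+G$, $\lambda K$ by $((KG)(\rho))(x) = (K(\rho))(x)\,(G(\rho))(x)$, $((K+G)(\rho))(x) = (K(\rho))(x) + (G(\rho))(x)$, $((\lambda K)(\rho))(x) = \lambda (K(\rho))(x)$ for all $x \in \mathbb{R}$, $\rho \in \mathrm{Per}(\mathbb{R})$. Then $KG$, $K+G$, $\lambda K$ can be approximated smoothly by the parameterized families $K_N G_N$, $K_N + G_N$, $\lambda K_N$, respectively (where $(K_NG_N)(\rho)=K_N(\rho)G_N(\rho)$ etc. for $\rho\in\mathbb{R}^N$).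
   Context: $\mathbb{R}_+ = [0,+\infty)$. $\mathrm{Per}(\mathbb{R})$ denotes the set of continuous, positive functions $\rho:\mathbb{R}\to(0,+\infty)$ that are periodic with period $1$; continuity of maps on $\mathrm{Per}(\mathbb{R})$ is with respect to the uniform (sup) metric. For $y \in \mathbb{R}^N$, $|y|_\infty = \max_i |y_i|$; for $x,y\in\mathbb{R}^N$, $x \le y$ means componentwise; $1_N = (1,\dots,1)^\top$. For $\rho = (\rho_0,\dots,\rho_{N-1})^\top \in \mathbb{R}^N$ and $i=1,\dots,N-1$, $\rho^{(i)} = (\rho_i,\dots,\rho_{N-1},\rho_0,\dots,\rho_{i-1})^\top$, $\rho^{(0)}=\rho$, and in general $\rho^{(k)}$ is obtained by applying the cyclic left shift $k$ times. For $h=1/N$ and $\rho\in\mathbb{R}^N$, $P_N\rho \in \mathrm{Per}(\mathbb{R})$ (for positive $\rho$) is the $1$-periodic function with $(P_N\rho)(x) = h^{-1}\rho_i((i+1)h - x) + h^{-1}\rho_{i+1}(x - ih)$ for $x \in [ih,(i+1)h]$, $i=0,\dots,N-2$, and $(P_N\rho)(x) = h^{-1}\rho_{N-1}(1-x) + h^{-1}\rho_0(x+h-1)$ for $x\in[(N-1)h,1]$ (piecewise linear interpolation of the values $\rho_i$ at the nodes $ih$). Definition (smooth approximation). Let $K:\mathrm{Per}(\mathbb{R})\to\mathrm{Per}(\mathbb{R})$ be continuous and suppose there is $v_{\max}>0$ with $0 \le (K(\rho))(x) \le v_{\max}$ for all $x\in\mathbb{R}$, $\rho \in \mathrm{Per}(\mathbb{R})$.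 A family of mappings $K_N:\mathbb{R}^N\to\mathbb{R}_+$, indexed by integers $N>2$, smoothly approximates $K$ if there exist constants $L,c,C,S\ge 0$ and non-decreasing functions $\gamma,\Gamma,W:\mathbb{R}_+\to\mathbb{R}_+$ such that $K_N(\rho)\le v_{\max}$ for all $\rho\in\mathbb{R}_+^N$, and for all $N>2$, $0<\rho_{\min}\le\rho_{\max}$, $i=0,\dots,N-1$ and all $\rho=(\rho_0,\dots,\rho_{N-1})^\top,\tilde\rho \in\mathbb{R}_+^N$ with $\rho_{\min}1_N\le\rho\le\rho_{\max}1_N$, $\rho_{\min}1_N\le\tilde\rho\le\rho_{\max}1_N$, writing $h=1/N$, $y = h^{-1}(\rho^{(1)}-\rho)$, $\varphi = h^{-2}(\rho^{(2)}-2\rho^{(1)}+\rho)$: (i) $|K_N(\rho)-K_N(\tilde\rho)| \le L|\rho-\tilde\rho|_\infty$; (ii) $|K_N(\rho)-K_N(\rho^{(1)})-K_N(\tilde\rho)+K_N(\tilde\rho^{(1)})| \le (h|\rho-\tilde\rho|_\infty + h^2)\Gamma(\rho_{\max})$; (iii) $-ch(\rho_{\max}-\rho_0) \le K_N(\rho^{(1)})-K_N(\rho) \le ch(\rho_0-\rho_{\min})$; (iv) $|2K_N(\rho^{(1)})-K_N(\rho)-K_N(\rho^{(2)})| \le h^2(\gamma(\rho_{\max}) + C|y|_\infty)$; (v) $|3K_N(\rho^{(1)})+K_N(\rho^{(3)})-K_N(\rho)-3K_N(\rho^{(2)})| \le h^3(W(\rho_{\max}+|y|_\infty) + C|\varphi|_\infty)$;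 (vi) $|(K(P_N\rho))(ih) - K_N(\rho^{(i)})| \le hS\rho_{\max}$. *)

From HB Require Import structures.
From mathcomp Require Import all_boot all_order all_algebra.
From mathcomp Require Import all_classical all_reals topology normedtype.
Set Implicit Arguments. Unset Strict Implicit. Unset Printing Implicit Defensive.
Import Order.TTheory GRing.Theory Num.Theory numFieldNormedType.Exports.
Local Open Scope ring_scope.

Section Defs.
Variable R : realType.

Definition Per (rho : R -> R) : Prop :=
  continuous rho /\ (forall x, rho (x + 1) = rho x) /\ (forall x, 0 < rho x).

Definition supn (N : nat) (y : 'I_N -> R) : R := \big[Num.max/0]_(i < N) `|y i|.

(* cyclic left shift: rho^(1)_i = rho_(i+1 mod N) *)
Definition shift (N : nat) (rho : 'I_N -> R) : 'I_N -> R := fun i => rho (ordS i).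
Definition shiftk (N : nat) (k : nat) (rho : 'I_N -> R) : 'I_N -> R := iter k (@shift N) rho.

(* rho_(k mod N) for an integer index k (0 if N = 0, never used) *)
Definition rho_at (N : nat) (rho : 'I_N -> R) (k : int) : R :=
  if [pick i : 'I_N | (nat_of_ord i)%:Z == (k %% N%:Z)%Z] is Some i then rho i else 0.

(* P_N rho: 1-periodic piecewise linear interpolation of rho_i at nodes i/N:
   on [i h, (i+1) h], value h^-1 rho_i ((i+1)h - x) + h^-1 rho_(i+1) (x - i h). *)
Definition PN (N : nat) (rho : 'I_N -> R) : R -> R := fun x =>
  let t := N%:R * x in
  let k := Num.floor t in
  let fr := t - k%:~R in
  rho_at rho k * (1 - fr) + rho_at rho (k + 1) * fr.

(* nondecreasing functions R_+ -> R_+ (represented on R, constrained on [0,oo)) *)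
Definition nondec_nonneg (f : R -> R) : Prop :=
  (forall x, 0 <= x -> 0 <= f x) /\ (forall x y, 0 <= x -> x <= y -> f x <= f y).

Definition sup_continuous_on_Per (K : (R -> R) -> (R -> R)) : Prop :=
  forall rho, Per rho -> forall eps, 0 < eps -> exists2 delta, 0 < delta &
    forall sigma, Per sigma -> (forall x, `|rho x - sigma x| <= delta) ->
      forall x, `|K rho x - K sigma x| <= eps.

Definition smoothly_approximates (K : (R -> R) -> (R -> R))
    (KN : forall N : nat, ('I_N -> R) -> R) : Prop :=
  (forall rho, Per rho -> continuous (K rho) /\ forall x, K rho (x + 1) = K rho x) /\
  sup_continuous_on_Per K /\
  (forall N (rho : 'I_N -> R), (2 < N)%N -> 0 <= KN N rho) /\
  exists2 vmax, 0 < vmax &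
  (forall rho, Per rho -> forall x, 0 <= K rho x <= vmax) /\
  (forall N (rho : 'I_N -> R), (2 < N)%N -> (forall i, 0 <= rho i) -> KN N rho <= vmax) /\
  exists L c C S : R, [/\ 0 <= L, 0 <= c, 0 <= C & 0 <= S] /\
  exists gam Gam W : R -> R,
    [/\ nondec_nonneg gam, nondec_nonneg Gam & nondec_nonneg W] /\
  forall (N : nat) (rmin rmax : R) (rho rho' : 'I_N -> R),
    (2 < N)%N -> 0 < rmin -> rmin <= rmax ->
    (forall i, rmin <= rho i <= rmax) -> (forall i, rmin <= rho' i <= rmax) ->
    let h := (N%:R)^-1 in
    let y : 'I_N -> R := fun i => h^-1 * (shift rho i - rho i) in
    let phi : 'I_N -> R := fun i =>
      h^-2 * (shiftk 2 rho i - 2 * shift rho i + rho i) in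
    let dist := supn (fun i => rho i - rho' i) in
    let rho0 := rho_at rho 0 in
    (
      `|KN N rho - KN N rho'| <= L * dist) /\ (
      `|KN N rho - KN N (shift rho) - KN N rho' + KN N (shift rho')|
        <= (h * dist + h ^+ 2) * Gam rmax) /\ (
      - (c * h * (rmax - rho0)) <= KN N (shift rho) - KN N rho
        /\ KN N (shift rho) - KN N rho <= c * h * (rho0 - rmin)) /\ (
      `|2 * KN N (shift rho) - KN N rho - KN N (shiftk 2 rho)|
        <= h ^+ 2 * (gam rmax + C * supn y)) /\ (
      `|3 * KN N (shift rho) + KN N (shiftk 3 rho) - KN N rho - 3 * KN N (shiftk 2 rho)|
        <= h ^+ 3 * (W (rmax + supn y) + C * supn phi)) /\ (
      forall i : 'I_N,
        `|K (PN rho) ((nat_of_ord i)%:R * h) - KN N (shiftk i rho)| <= h * S * rmax).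

End Defs.

(* Sums and nonnegative multiples inherit every estimate by linearity.  For products, each of
   the estimates (i)-(vi) follows from a discrete product rule, e.g., with a_j = K_N(rho^(j))
   and b_j = G_N(rho^(j)),
     2 a1 b1 - a0 b0 - a2 b2 = (2 a1 - a0 - a2) b1 + a2 (2 b1 - b0 - b2) - (a2 - a0) (b1 - b0):
   each term is an estimate for K_N or G_N multiplied by the bound v_max or by an increment,
   and increments are at most c h rho_max by (iii), so the cross terms carry the right power
   of h.  The one analytic input is that P_N rho lies in Per(R) (it is positive, and continuous
   as a locally Lipschitz piecewise linear function), so that G(P_N rho) <= v_max in (vi). *)

From Pilot Require Import Defs.
From HB Require Import structures.
From mathcomp Require Import all_boot all_order all_algebra.
From mathcomp Require Import all_classical all_reals topology normedtype.
From mathcomp Require Import ring lra.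
Import Order.TTheory GRing.Theory Num.Theory numFieldNormedType.Exports.
Set Implicit Arguments. Unset Strict Implicit. Unset Printing Implicit Defensive.
Local Open Scope ring_scope.

Section LocallyLipschitz.
Variable R : realType.

Lemma continuous_locally_lipschitz (f : R -> R) (M : R) :
  (forall s t, `|s - t| <= 1 -> `|f s - f t| <= M * `|s - t|) -> continuous f.
Proof.
move=> f_lip x; apply/cvgrPdist_lt => e e_gt0.
have M1_gt0 : 0 < `|M| + 1 by rewrite ltr_pwDr // normr_ge0.
near=> y.
have xy_lt1 : `|x - y| < 1 by near: y; apply: cvgr_dist_lt.
have xy_lte : `|x - y| < e / (`|M| + 1).
  by near: y; apply: cvgr_dist_lt => //; rewrite divr_gt0.
apply: (le_lt_trans (f_lip _ _ (ltW xy_lt1))).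
apply: (le_lt_trans (y := (`|M| + 1) * `|x - y|)).
  by rewrite ler_wpM2r // (le_trans (ler_norm M)) // lerDl.
by rewrite -ltr_pdivlMl // mulrC.
Unshelve. all: by end_near.
Qed.

End LocallyLipschitz.

Section PiecewiseLinear.
Variables (R : realType) (g : int -> R).

Definition pwlin (t : R) : R :=
  g (Num.floor t) * (1 - (t - (Num.floor t)%:~R))
  + g (Num.floor t + 1) * (t - (Num.floor t)%:~R).

Lemma pwlin_cell k t : k%:~R <= t <= (k + 1)%:~R ->
  pwlin t = g k * ((k + 1)%:~R - t) + g (k + 1) * (t - k%:~R).
Proof.
case/andP => kt tk1; rewrite /pwlin.
have [t_lt|t_ge] := ltP t (k + 1)%:~R.
  have -> : Num.floor t = k by apply: floor_def; rewrite kt t_lt.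
  by rewrite intrD; congr (_ + _); congr (_ * _); lra.
have -> : t = (k + 1)%:~R by apply/eqP; rewrite eq_le tk1 t_ge.
by rewrite intrKfloor subrr !(mulr0, subr0, mulr1, addr0) intrD; ring.
Qed.

Lemma pwlin_gt0 t : (forall k, 0 < g k) -> 0 < pwlin t.
Proof.
move=> g_gt0; rewrite /pwlin; set fr := t - _.
have fr_ge0 : 0 <= fr by rewrite subr_ge0 floor_le.
have fr_lt1 : fr < 1 by have := floorD1_gt t; rewrite /fr intrD; lra.
have := mulr_ge0 (ltW (g_gt0 (Num.floor t + 1))) fr_ge0.
have : 0 < g (Num.floor t) * (1 - fr) by rewrite mulr_gt0 ?g_gt0 ?subr_gt0.
lra.
Qed.

Lemma pwlin_periodic (m : int) t : (forall k, g (k + m) = g k) ->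
  pwlin (t + m%:~R) = pwlin t.
Proof.
move=> g_per; rewrite /pwlin floorDrz ?intr_int // intrKfloor.
rewrite g_per (addrAC _ m) g_per intrD; congr (_ + _); congr (_ * _); ring.
Qed.

Variable B : R.
Hypothesis g_bound : forall k, `|g k| <= B.

Lemma pwlin_lipschitz_cell k s t :
  k%:~R <= s <= (k + 1)%:~R -> k%:~R <= t <= (k + 1)%:~R ->
  `|pwlin t - pwlin s| <= 2 * B * `|t - s|.
Proof.
move=> ks kt; rewrite (pwlin_cell ks) (pwlin_cell kt).
have -> : g k * ((k + 1)%:~R - t) + g (k + 1) * (t - k%:~R)
    - (g k * ((k + 1)%:~R - s) + g (k + 1) * (s - k%:~R)) = (g (k + 1) - g k) * (t - s)
  by ring.
rewrite normrM ler_wpM2r //.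
by apply: le_trans (ler_normB _ _) _; have := g_bound (k + 1); have := g_bound k; lra.
Qed.

(* Two points at distance at most 1 lie in one cell or in two adjacent cells
   meeting at [floor t]. *)
Lemma pwlin_lipschitz_near s t : s <= t <= s + 1 ->
  `|pwlin t - pwlin s| <= 2 * B * (t - s).
Proof.
case/andP => st ts1; set p := Num.floor t.
have := floor_le t; have := floorD1_gt t; rewrite -/p intrD => tp1 pt.
have [ps|sp] := lerP p%:~R s.
  rewrite -(ger0_norm (x := t - s)); last lra.
  by apply: (pwlin_lipschitz_cell (k := p)); apply/andP; rewrite intrD; lra.
have left_cell : forall u, s <= u <= p%:~R -> (p - 1)%:~R <= u <= (p - 1 + 1)%:~R.
  by move=> u /andP[su up]; rewrite subrK intrD lerBlDr; apply/andP; lra.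
have right_cell : forall u, p%:~R <= u <= t -> p%:~R <= u <= (p + 1)%:~R.
  by move=> u /andP[pu ut]; rewrite intrD; apply/andP; lra.
have right_part : `|pwlin t - pwlin p%:~R| <= 2 * B * (t - p%:~R).
  rewrite -[t - _]ger0_norm ?subr_ge0 //.
  by apply: (pwlin_lipschitz_cell (k := p)); apply: right_cell; apply/andP; lra.
have left_part : `|pwlin p%:~R - pwlin s| <= 2 * B * (p%:~R - s).
  rewrite -[_ - s]ger0_norm; last by rewrite subr_ge0 ltW.
  by apply: (pwlin_lipschitz_cell (k := p - 1)); apply: left_cell; apply/andP; lra.
have -> : pwlin t - pwlin s = (pwlin t - pwlin p%:~R) + (pwlin p%:~R - pwlin s) by ring.
apply: le_trans (ler_normD _ _) (le_trans (lerD right_part left_part) _).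
by rewrite -mulrDr addrA subrK.
Qed.

Lemma pwlin_continuous : continuous pwlin.
Proof.
apply: (@continuous_locally_lipschitz _ _ (2 * B)) => s t st1.
wlog le_ts : s t st1 / t <= s.
  move=> W; have [|/ltW] := leP t s; first exact: W.
  by move=> st; rewrite distrC (distrC s); apply: W; rewrite // distrC.
rewrite (ger0_norm (x := s - t)) ?subr_ge0 //; apply: pwlin_lipschitz_near.
by move: st1; rewrite ger0_norm ?subr_ge0 // => ?; apply/andP; lra.
Qed.

End PiecewiseLinear.

Section Grids.
Variables (R : realType) (N : nat).
Implicit Types y rho : 'I_N -> R.

Lemma supn_ge0 y : 0 <= supn y.
Proof. by apply: (big_ind (fun x => 0 <= x)) => // x z x_ge0 z_ge0; rewrite le_max x_ge0. Qed.

Lemma ler_supn y i : `|y i| <= supn y.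
Proof. by rewrite /supn (bigD1 i) //= le_max lexx. Qed.

Lemma supn_le y M : 0 <= M -> (forall i, `|y i| <= M) -> supn y <= M.
Proof.
by move=> M_ge0 yM; apply: (big_ind (fun x => x <= M)) => // x z xM zM; rewrite ge_max xM zM.
Qed.

Lemma supn_shift y : supn (Defs.shift y) <= supn y.
Proof. by apply: supn_le; [exact: supn_ge0 | move=> i; exact: (ler_supn y (ordS i))]. Qed.

Lemma shiftk_bounded rho a b k : (forall i, a <= rho i <= b) ->
  forall i, a <= shiftk k rho i <= b.
Proof. by move=> rho_in; elim: k => [|k IHk] //= i; exact: IHk. Qed.

End Grids.

Section Interpolation.
Variables (R : realType) (N : nat).
Implicit Type rho : 'I_N -> R.

Lemma rho_at_mem rho k : (0 < N)%N -> exists i, rho_at rho k = rho i.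
Proof.
move=> N_gt0; rewrite /rho_at; case: pickP => [i _|no_pick]; first by exists i.
have k_mod_ge0 : 0 <= (k %% N%:Z)%Z by rewrite modz_ge0 // eqz_nat -lt0n.
have k_mod_lt : (`|(k %% N%:Z)%Z| < N)%N by rewrite -ltz_nat gez0_abs // ltz_pmod.
by have := no_pick (Ordinal k_mod_lt); rewrite /= gez0_abs // eqxx.
Qed.

Lemma rho_at_periodic rho k : rho_at rho (k + N%:Z) = rho_at rho k.
Proof. by rewrite /rho_at modzDr. Qed.

Lemma rho_at_bounded rho a b k : (0 < N)%N -> (forall i, a <= rho i <= b) ->
  a <= rho_at rho k <= b.
Proof. by move=> N_gt0 rho_in; have [i ->] := rho_at_mem rho k N_gt0. Qed.

Lemma PN_Per rho : (0 < N)%N -> (forall i, 0 < rho i) -> Per (PN rho).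
Proof.
move=> N_gt0 rho_gt0.
have PNE x : PN rho x = pwlin (rho_at rho) (N%:R * x) by [].
split; [|split].
- have rho_at_bound k : `|rho_at rho k| <= supn rho.
    by have [i ->] := rho_at_mem rho k N_gt0; exact: ler_supn.
  change (continuous (pwlin (rho_at rho) \o *%R N%:R)) => x.
  apply: continuous_comp; first exact: mulrl_continuous.
  exact: pwlin_continuous rho_at_bound _.
- by move=> x; rewrite !PNE mulrDr mulr1 (pwlin_periodic (m := N%:Z)) // => k;
    exact: rho_at_periodic.
- move=> x; rewrite PNE pwlin_gt0 // => k.
  by have [i ->] := rho_at_mem rho k N_gt0.
Qed.

End Interpolation.

Section DiscreteLeibniz.
Variable R : realDomainType.
Implicit Types a b x y u v : R.

Lemma ler_normD_le x y u v : `|x| <= u -> `|y| <= v -> `|x + y| <= u + v.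
Proof. by move=> xu yv; apply: le_trans (ler_normD _ _) (lerD xu yv). Qed.

Lemma ler_normM_le x y u v : `|x| <= u -> `|y| <= v -> `|x * y| <= u * v.
Proof. by move=> xu yv; rewrite normrM ler_pM. Qed.

Lemma ler_normD_split x y z u v w :
  z = x + y -> u + v = w -> `|x| <= u -> `|y| <= v -> `|z| <= w.
Proof. by move=> -> <-; exact: ler_normD_le. Qed.

Lemma ler_normM_split a x z u w :
  0 <= a -> z = a * x -> a * u = w -> `|x| <= u -> `|z| <= w.
Proof. by move=> a_ge0 -> <- xu; rewrite normrM ger0_norm // ler_wpM2l. Qed.

Lemma mul_in_range x y u v w : -u <= x /\ x <= v -> 0 <= y <= w -> 0 <= u -> 0 <= v ->
  -(u * w) <= x * y /\ x * y <= v * w.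
Proof.
case=> ux xv /andP[y_ge0 yw] u_ge0 v_ge0.
have : 0 <= (x + u) * y by rewrite mulr_ge0 //; lra.
have : 0 <= u * (w - y) by rewrite mulr_ge0 //; lra.
have : 0 <= (v - x) * y by rewrite mulr_ge0 //; lra.
have : 0 <= v * (w - y) by rewrite mulr_ge0 //; lra.
split; lra.
Qed.

Lemma leibniz_increment a0 a1 b0 b1 vA vB u v u' v' :
  -u <= a1 - a0 /\ a1 - a0 <= v -> 0 <= b1 <= vB ->
  -u' <= b1 - b0 /\ b1 - b0 <= v' -> 0 <= a0 <= vA ->
  0 <= u -> 0 <= v -> 0 <= u' -> 0 <= v' ->
  -(u * vB + u' * vA) <= a1 * b1 - a0 * b0 /\ a1 * b1 - a0 * b0 <= v * vB + v' * vA.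
Proof.
move=> da b1_in db a0_in u_ge0 v_ge0 u'_ge0 v'_ge0.
have [l1 r1] := mul_in_range da b1_in u_ge0 v_ge0.
have [l2 r2] := mul_in_range db a0_in u'_ge0 v'_ge0.
have -> : a1 * b1 - a0 * b0 = (a1 - a0) * b1 + (b1 - b0) * a0 by ring.
split; lra.
Qed.

Lemma leibniz_difference a a' b b' vA vB dA dB :
  `|a - a'| <= dA -> `|b| <= vB -> `|a'| <= vA -> `|b - b'| <= dB ->
  `|a * b - a' * b'| <= dA * vB + vA * dB.
Proof.
have -> : a * b - a' * b' = (a - a') * b + a' * (b - b') by ring.
by move=> *; do ![assumption | apply: ler_normD_le | apply: ler_normM_le].
Qed.

Lemma leibniz_mixed_difference a0 a1 a0' a1' b0 b1 b0' b1' vA vB eA eB iA iB dA dB :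
  `|a0 - a1 - a0' + a1'| <= eA -> `|b0| <= vB ->
  `|a1' - a0'| <= iA -> `|b0 - b0'| <= dB ->
  `|a1 - a1'| <= dA -> `|b1 - b0| <= iB ->
  `|a1'| <= vA -> `|b0 - b1 - b0' + b1'| <= eB ->
  `|a0 * b0 - a1 * b1 - a0' * b0' + a1' * b1'| <= eA * vB + iA * dB + dA * iB + vA * eB.
Proof.
have -> : a0 * b0 - a1 * b1 - a0' * b0' + a1' * b1' =
  (a0 - a1 - a0' + a1') * b0 - (a1' - a0') * (b0 - b0') - (a1 - a1') * (b1 - b0)
  + a1' * (b0 - b1 - b0' + b1') by ring.
by move=> *; do ![assumption | apply: ler_normD_le | rewrite normrN | apply: ler_normM_le].
Qed.

Lemma leibniz_second_difference a0 a1 a2 b0 b1 b2 vA vB eA eB dA dB :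
  `|2 * a1 - a0 - a2| <= eA -> `|b1| <= vB -> `|a2| <= vA -> `|2 * b1 - b0 - b2| <= eB ->
  `|a2 - a0| <= dA -> `|b1 - b0| <= dB ->
  `|2 * (a1 * b1) - a0 * b0 - a2 * b2| <= eA * vB + vA * eB + dA * dB.
Proof.
have -> : 2 * (a1 * b1) - a0 * b0 - a2 * b2 =
  (2 * a1 - a0 - a2) * b1 + a2 * (2 * b1 - b0 - b2) - (a2 - a0) * (b1 - b0) by ring.
by move=> *; do ![assumption | apply: ler_normD_le | rewrite normrN | apply: ler_normM_le].
Qed.

Lemma leibniz_third_difference a0 a1 a2 a3 b0 b1 b2 b3 vA vB eA eB dA dB fA fB :
  `|a0| <= vA -> `|3 * b1 + b3 - b0 - 3 * b2| <= fB ->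
  `|a1 - a0| <= dA -> `|2 * b2 - b1 - b3| <= eB ->
  `|2 * a1 - a0 - a2| <= eA -> `|b3 - b2| <= dB ->
  `|3 * a1 + a3 - a0 - 3 * a2| <= fA -> `|b3| <= vB ->
  `|3 * (a1 * b1) + a3 * b3 - a0 * b0 - 3 * (a2 * b2)|
    <= vA * fB + 3 * (dA * eB) + 3 * (eA * dB) + fA * vB.
Proof.
have -> : 3 * (a1 * b1) + a3 * b3 - a0 * b0 - 3 * (a2 * b2) =
  a0 * (3 * b1 + b3 - b0 - 3 * b2) - 3 * ((a1 - a0) * (2 * b2 - b1 - b3))
  - 3 * ((2 * a1 - a0 - a2) * (b3 - b2)) + (3 * a1 + a3 - a0 - 3 * a2) * b3 by ring.
have : `|3 : R| <= 3 by rewrite ger0_norm.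
by move=> *; do ![assumption | apply: ler_normD_le | rewrite normrN | apply: ler_normM_le].
Qed.

End DiscreteLeibniz.


Section Estimates.
Variable R : realType.

(* Properties (i)-(vi) of [smoothly_approximates], copied verbatim so that both definitions
   unfold to the same term. *)
Definition discrete_estimates (K : (R -> R) -> (R -> R))
    (KN : forall N : nat, ('I_N -> R) -> R) (L c C S : R) (gam Gam W : R -> R) : Prop :=
  forall (N : nat) (rmin rmax : R) (rho rho' : 'I_N -> R),
    (2 < N)%N -> 0 < rmin -> rmin <= rmax ->
    (forall i, rmin <= rho i <= rmax) -> (forall i, rmin <= rho' i <= rmax) ->
    let h := (N%:R)^-1 in
    let y : 'I_N -> R := fun i => h^-1 * (Defs.shift rho i - rho i) in
    let phi : 'I_N -> R := fun i =>
      h^-2 * (shiftk 2 rho i - 2 * Defs.shift rho i + rho i) in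
    let dist := supn (fun i => rho i - rho' i) in
    let rho0 := rho_at rho 0 in
    ( `|KN N rho - KN N rho'| <= L * dist) /\ (
      `|KN N rho - KN N (Defs.shift rho) - KN N rho' + KN N (Defs.shift rho')|
        <= (h * dist + h ^+ 2) * Gam rmax) /\ (
      - (c * h * (rmax - rho0)) <= KN N (Defs.shift rho) - KN N rho
        /\ KN N (Defs.shift rho) - KN N rho <= c * h * (rho0 - rmin)) /\ (
      `|2 * KN N (Defs.shift rho) - KN N rho - KN N (shiftk 2 rho)|
        <= h ^+ 2 * (gam rmax + C * supn y)) /\ (
      `|3 * KN N (Defs.shift rho) + KN N (shiftk 3 rho) - KN N rho - 3 * KN N (shiftk 2 rho)|
        <= h ^+ 3 * (W (rmax + supn y) + C * supn phi)) /\ (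
      forall i : 'I_N,
        `|K (PN rho) ((nat_of_ord i)%:R * h) - KN N (shiftk i rho)| <= h * S * rmax).

End Estimates.

Section OneFamily.
Variables (R : realType) (K : (R -> R) -> (R -> R)) (KN : forall N : nat, ('I_N -> R) -> R).
Arguments KN : clear implicits.
Variables (vmax L c C S : R) (gam Gam W : R -> R).
Hypothesis KN_range : forall N (rho : 'I_N -> R),
  (2 < N)%N -> (forall i, 0 <= rho i) -> 0 <= KN N rho <= vmax.
Hypotheses (L_ge0 : 0 <= L) (c_ge0 : 0 <= c) (C_ge0 : 0 <= C).
Hypothesis KN_est : discrete_estimates K KN L c C S gam Gam W.
Variables (N : nat) (rmin rmax : R).
Hypotheses (N_gt2 : (2 < N)%N) (rmin_gt0 : 0 < rmin) (rmin_le_rmax : rmin <= rmax).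
Local Notation h := (N%:R^-1 : R).
Local Notation bounded rho := (forall i, rmin <= rho i <= rmax).

Lemma approx_range rho : bounded rho -> 0 <= KN N rho <= vmax.
Proof.
by move=> rho_in; apply: KN_range => // i; have /andP[+ _] := rho_in i; exact/le_trans/ltW.
Qed.

Lemma approx_norm_le rho : bounded rho -> `|KN N rho| <= vmax.
Proof. by move=> /approx_range /andP[KN_ge0 KN_le]; rewrite ger0_norm. Qed.

Lemma approx_increment_le rho : bounded rho ->
  `|KN N (Defs.shift rho) - KN N rho| <= c * h * rmax.
Proof.
move=> rho_in; have [_ [_ [[lo hi] _]]] := KN_est N_gt2 rmin_gt0 rmin_le_rmax rho_in rho_in.
have /andP[r0_ge r0_le] := rho_at_bounded 0 (ltnW (ltnW N_gt2)) rho_in.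
have ch_ge0 : 0 <= c * h by rewrite mulr_ge0 // invr_ge0.
have := ler_wpM2l ch_ge0 (ltW rmin_gt0); have := ler_wpM2l ch_ge0 r0_le.
have := ler_wpM2l ch_ge0 r0_ge.
move: lo hi; rewrite ler_norml !mulrBr mulr0 => lo hi *; apply/andP; split; lra.
Qed.

Lemma approx_lipschitz_shift rho rho' : bounded rho -> bounded rho' ->
  `|KN N (Defs.shift rho) - KN N (Defs.shift rho')| <= L * supn (fun i => rho i - rho' i).
Proof.
move=> rho_in rho'_in.
have [lip _] := KN_est N_gt2 rmin_gt0 rmin_le_rmax (shiftk_bounded 1 rho_in)
  (shiftk_bounded 1 rho'_in).
by apply: le_trans lip _; rewrite ler_wpM2l //; exact: supn_shift.
Qed.

Lemma approx_second_difference_shift rho : bounded rho ->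
  `|2 * KN N (shiftk 2 rho) - KN N (Defs.shift rho) - KN N (shiftk 3 rho)|
    <= h ^+ 2 * (gam rmax + C * supn (fun i => h^-1 * (Defs.shift rho i - rho i))).
Proof.
move=> rho_in; have rho1_in := shiftk_bounded 1 rho_in.
have [_ [_ [_ [second _]]]] := KN_est N_gt2 rmin_gt0 rmin_le_rmax rho1_in rho1_in.
apply: le_trans second _; rewrite ler_wpM2l ?exprn_ge0 ?invr_ge0 // lerD2l ler_wpM2l //.
exact: supn_shift.
Qed.

End OneFamily.

Section NondecNonneg.
Variable R : realType.
Implicit Types f g : R -> R.

Lemma nondec_nonneg_id : nondec_nonneg (fun x : R => x).
Proof. by []. Qed.

Lemma nondec_nonneg_add f g : nondec_nonneg f -> nondec_nonneg g ->
  nondec_nonneg (fun x => f x + g x).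
Proof.
move=> [f_ge0 f_nd] [g_ge0 g_nd]; split=> [x x_ge0|x y x_ge0 xy].
  by rewrite addr_ge0 ?f_ge0 ?g_ge0.
by rewrite lerD ?f_nd ?g_nd.
Qed.

Lemma nondec_nonneg_scale a f : 0 <= a -> nondec_nonneg f -> nondec_nonneg (fun x => a * f x).
Proof.
move=> a_ge0 [f_ge0 f_nd]; split=> [x x_ge0|x y x_ge0 xy]; first by rewrite mulr_ge0 ?f_ge0.
by rewrite ler_wpM2l ?f_nd.
Qed.

Lemma nondec_nonneg_mul f g : nondec_nonneg f -> nondec_nonneg g ->
  nondec_nonneg (fun x => f x * g x).
Proof.
move=> [f_ge0 f_nd] [g_ge0 g_nd]; split=> [x x_ge0|x y x_ge0 xy].
  by rewrite mulr_ge0 ?f_ge0 ?g_ge0.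
by rewrite ler_pM ?f_ge0 ?g_ge0 ?f_nd ?g_nd.
Qed.

End NondecNonneg.

Section SupContinuity.
Variable R : realType.
Implicit Types K G : (R -> R) -> (R -> R).

Lemma sup_continuous_on_Per_add K G :
  sup_continuous_on_Per K -> sup_continuous_on_Per G ->
  sup_continuous_on_Per (fun rho x => K rho x + G rho x).
Proof.
move=> K_cont G_cont rho rho_Per e e_gt0.
have [dK dK_gt0 K_close] := K_cont rho rho_Per (e / 2) ltac:(lra).
have [dG dG_gt0 G_close] := G_cont rho rho_Per (e / 2) ltac:(lra).
exists (Num.min dK dG) => [|sigma sigma_Per close x]; first by rewrite lt_min dK_gt0.
have closeK y : `|rho y - sigma y| <= dK by apply: le_trans (close y) _; rewrite ge_min lexx.
have closeG y : `|rho y - sigma y| <= dG.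
  by apply: le_trans (close y) _; rewrite ge_min lexx orbT.
by apply: (ler_normD_split _ _ (K_close _ sigma_Per closeK x) (G_close _ sigma_Per closeG x));
  [ring | field].
Qed.

Lemma sup_continuous_on_Per_scale lam K : 0 <= lam ->
  sup_continuous_on_Per K -> sup_continuous_on_Per (fun rho x => lam * K rho x).
Proof.
move=> lam_ge0 K_cont rho rho_Per e e_gt0.
have lam1_gt0 : 0 < lam + 1 by lra.
have [d d_gt0 K_close] := K_cont rho rho_Per (e / (lam + 1)) ltac:(by rewrite divr_gt0).
exists d => // sigma sigma_Per close x.
apply: (le_trans (ler_normM_split lam_ge0 _ erefl (K_close sigma sigma_Per close x))).
  by ring.
by rewrite mulrA ler_pdivrMr // mulrDr mulr1 mulrC lerDl ltW.
Qed.

Lemma sup_continuous_on_Per_mul vK vG K G : 0 < vK -> 0 < vG ->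
  (forall rho, Per rho -> forall x, 0 <= K rho x <= vK) ->
  (forall rho, Per rho -> forall x, 0 <= G rho x <= vG) ->
  sup_continuous_on_Per K -> sup_continuous_on_Per G ->
  sup_continuous_on_Per (fun rho x => K rho x * G rho x).
Proof.
move=> vK_gt0 vG_gt0 K_range G_range K_cont G_cont rho rho_Per e e_gt0.
have [dK dK_gt0 K_close] :=
  K_cont rho rho_Per (e / (2 * vG)) ltac:(by rewrite divr_gt0 ?mulr_gt0).
have [dG dG_gt0 G_close] :=
  G_cont rho rho_Per (e / (2 * vK)) ltac:(by rewrite divr_gt0 ?mulr_gt0).
exists (Num.min dK dG) => [|sigma sigma_Per close x]; first by rewrite lt_min dK_gt0.
have closeK y : `|rho y - sigma y| <= dK by apply: le_trans (close y) _; rewrite ge_min lexx.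
have closeG y : `|rho y - sigma y| <= dG.
  by apply: le_trans (close y) _; rewrite ge_min lexx orbT.
have range_norm (H : (R -> R) -> R -> R) v s :
    (forall rho, Per rho -> forall x, 0 <= H rho x <= v) -> Per s -> `|H s x| <= v.
  by move=> H_range /H_range /(_ x) /andP[H_ge0 H_le]; rewrite ger0_norm.
apply: le_trans (leibniz_difference (K_close _ sigma_Per closeK x)
  (range_norm _ _ _ G_range rho_Per) (range_norm _ _ _ K_range sigma_Per)
  (G_close _ sigma_Per closeG x)) _.
by rewrite [leLHS](_ : _ = e) //; field; rewrite !gt_eqF.
Qed.

End SupContinuity.

Section LinearEstimates.
Variables (R : realType) (K G : (R -> R) -> (R -> R)) (KN GN : forall N : nat, ('I_N -> R) -> R).
Arguments KN : clear implicits.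
Arguments GN : clear implicits.
Variables (LK cK CK SK LG cG CG SG : R) (gK GK WK gG GG WG : R -> R).
Hypothesis KN_est : discrete_estimates K KN LK cK CK SK gK GK WK.
Hypothesis GN_est : discrete_estimates G GN LG cG CG SG gG GG WG.

Lemma discrete_estimates_add :
  discrete_estimates (fun rho x => K rho x + G rho x) (fun N rho => KN N rho + GN N rho)
    (LK + LG) (cK + cG) (CK + CG) (SK + SG)
    (fun r => gK r + gG r) (fun r => GK r + GG r) (fun r => WK r + WG r).
Proof.
move=> N rmin rmax rho rho' N_gt2 rmin_gt0 rmin_le rho_in rho'_in.
have [K1 [K2 [[K3l K3r] [K4 [K5 K6]]]]] := KN_est N_gt2 rmin_gt0 rmin_le rho_in rho'_in.
have [G1 [G2 [[G3l G3r] [G4 [G5 G6]]]]] := GN_est N_gt2 rmin_gt0 rmin_le rho_in rho'_in.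
split; [|split; [|split; [|split; [|split]]]].
- by apply: (ler_normD_split _ _ K1 G1); ring.
- by apply: (ler_normD_split _ _ K2 G2); ring.
- by split; lra.
- by apply: (ler_normD_split _ _ K4 G4); ring.
- by apply: (ler_normD_split _ _ K5 G5); ring.
- by move=> i; apply: (ler_normD_split _ _ (K6 i) (G6 i)); ring.
Qed.

Lemma discrete_estimates_scale lam : 0 <= lam ->
  discrete_estimates (fun rho x => lam * K rho x) (fun N rho => lam * KN N rho)
    (lam * LK) (lam * cK) (lam * CK) (lam * SK)
    (fun r => lam * gK r) (fun r => lam * GK r) (fun r => lam * WK r).
Proof.
move=> lam_ge0 N rmin rmax rho rho' N_gt2 rmin_gt0 rmin_le rho_in rho'_in.
have [K1 [K2 [[K3l K3r] [K4 [K5 K6]]]]] := KN_est N_gt2 rmin_gt0 rmin_le rho_in rho'_in.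
split; [|split; [|split; [|split; [|split]]]].
- by apply: (ler_normM_split lam_ge0 _ _ K1); ring.
- by apply: (ler_normM_split lam_ge0 _ _ K2); ring.
- by have := ler_wpM2l lam_ge0 K3l; have := ler_wpM2l lam_ge0 K3r; split; lra.
- by apply: (ler_normM_split lam_ge0 _ _ K4); ring.
- by apply: (ler_normM_split lam_ge0 _ _ K5); ring.
- by move=> i; apply: (ler_normM_split lam_ge0 _ _ (K6 i)); ring.
Qed.

End LinearEstimates.

Section ProductEstimates.
Variables (R : realType) (K G : (R -> R) -> (R -> R)) (KN GN : forall N : nat, ('I_N -> R) -> R).
Arguments KN : clear implicits.
Arguments GN : clear implicits.
Variables (vK LK cK CK SK vG LG cG CG SG : R) (gK GK WK gG GG WG : R -> R).
Hypothesis G_range : forall rho, Per rho -> forall x, 0 <= G rho x <= vG.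
Hypothesis KN_range : forall N (rho : 'I_N -> R),
  (2 < N)%N -> (forall i, 0 <= rho i) -> 0 <= KN N rho <= vK.
Hypothesis GN_range : forall N (rho : 'I_N -> R),
  (2 < N)%N -> (forall i, 0 <= rho i) -> 0 <= GN N rho <= vG.
Hypotheses (vK_ge0 : 0 <= vK) (LK_ge0 : 0 <= LK) (cK_ge0 : 0 <= cK) (CK_ge0 : 0 <= CK).
Hypotheses (vG_ge0 : 0 <= vG) (LG_ge0 : 0 <= LG) (cG_ge0 : 0 <= cG) (CG_ge0 : 0 <= CG).
Hypotheses (gK_nn : nondec_nonneg gK) (GK_nn : nondec_nonneg GK) (WK_nn : nondec_nonneg WK).
Hypotheses (gG_nn : nondec_nonneg gG) (GG_nn : nondec_nonneg GG) (WG_nn : nondec_nonneg WG).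
Hypothesis KN_est : discrete_estimates K KN LK cK CK SK gK GK WK.
Hypothesis GN_est : discrete_estimates G GN LG cG CG SG gG GG WG.

(* Each constant is read off the bound of the matching [leibniz_*] lemma; the terms with a
   factor r come from the increment bound |K_N(rho^(1)) - K_N(rho)| <= c h rmax. *)
Definition mul_gam r := vG * gK r + vK * gG r + 2 * (cK * cG) * (r * r).
Definition mul_Gam r := vG * GK r + vK * GG r + (cK * LG + LK * cG) * r.
Definition mul_W r := vG * WK r + vK * WG r
  + 3 * cK * (r * (gG r + CG * r)) + 3 * cG * (r * (gK r + CK * r)).

Lemma nondec_nonneg_mul_gam : nondec_nonneg mul_gam.
Proof.
apply: nondec_nonneg_add; first by apply: nondec_nonneg_add; exact: nondec_nonneg_scale.
apply: nondec_nonneg_scale; first by rewrite !mulr_ge0.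
by apply: nondec_nonneg_mul; exact: nondec_nonneg_id.
Qed.

Lemma nondec_nonneg_mul_Gam : nondec_nonneg mul_Gam.
Proof.
apply: nondec_nonneg_add; first by apply: nondec_nonneg_add; exact: nondec_nonneg_scale.
apply: nondec_nonneg_scale; last exact: nondec_nonneg_id.
by rewrite addr_ge0 ?mulr_ge0.
Qed.

Lemma nondec_nonneg_mul_W : nondec_nonneg mul_W.
Proof.
have lin_growth (g : R -> R) (C0 : R) : nondec_nonneg g -> 0 <= C0 ->
    nondec_nonneg (fun r => r * (g r + C0 * r)).
  move=> g_nn C0_ge0; apply: nondec_nonneg_mul; first exact: nondec_nonneg_id.
  apply: nondec_nonneg_add g_nn _; apply: nondec_nonneg_scale => //.
apply: nondec_nonneg_add; last first.
  by apply: nondec_nonneg_scale _ (lin_growth _ _ gK_nn CK_ge0); rewrite mulr_ge0.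
apply: nondec_nonneg_add; last first.
  by apply: nondec_nonneg_scale _ (lin_growth _ _ gG_nn CG_ge0); rewrite mulr_ge0.
by apply: nondec_nonneg_add; exact: nondec_nonneg_scale.
Qed.

Section FixedGrid.
Variables (N : nat) (rmin rmax : R) (rho rho' : 'I_N -> R).
Hypotheses (N_gt2 : (2 < N)%N) (rmin_gt0 : 0 < rmin) (rmin_le_rmax : rmin <= rmax).
Hypotheses (rho_in : forall i, rmin <= rho i <= rmax) (rho'_in : forall i, rmin <= rho' i <= rmax).
Local Notation h := (N%:R^-1 : R).
Local Notation dist := (supn (fun i => rho i - rho' i)).
Local Notation Y := (supn (fun i => h^-1 * (Defs.shift rho i - rho i))).
Local Notation Phi := (supn (fun i => h^-2 * (shiftk 2 rho i - 2 * Defs.shift rho i + rho i))).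
Local Notation bounded r := (forall i : 'I_N, rmin <= r i <= rmax).

Let h_ge0 : 0 <= h. Proof. by rewrite invr_ge0. Qed.
Let rmax_ge0 : 0 <= rmax. Proof. exact: le_trans (ltW rmin_gt0) rmin_le_rmax. Qed.
Let shift_in k : bounded (shiftk k rho). Proof. exact: shiftk_bounded. Qed.
Let shift'_in k : bounded (shiftk k rho'). Proof. exact: shiftk_bounded. Qed.
Let KN_norm r : bounded r -> `|KN N r| <= vK.
Proof. exact: (approx_norm_le KN_range N_gt2 rmin_gt0 (rho := r)). Qed.
Let GN_norm r : bounded r -> `|GN N r| <= vG.
Proof. exact: (approx_norm_le GN_range N_gt2 rmin_gt0 (rho := r)). Qed.
Let KN_incr r : bounded r -> `|KN N (Defs.shift r) - KN N r| <= cK * h * rmax.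
Proof. exact: (approx_increment_le cK_ge0 KN_est N_gt2 rmin_gt0 rmin_le_rmax (rho := r)). Qed.
Let GN_incr r : bounded r -> `|GN N (Defs.shift r) - GN N r| <= cG * h * rmax.
Proof. exact: (approx_increment_le cG_ge0 GN_est N_gt2 rmin_gt0 rmin_le_rmax (rho := r)). Qed.

Lemma mul_lipschitz_est :
  `|KN N rho * GN N rho - KN N rho' * GN N rho'| <= (vG * LK + vK * LG) * dist.
Proof.
have [K1 _] := KN_est N_gt2 rmin_gt0 rmin_le_rmax rho_in rho'_in.
have [G1 _] := GN_est N_gt2 rmin_gt0 rmin_le_rmax rho_in rho'_in.
have -> : (vG * LK + vK * LG) * dist = LK * dist * vG + vK * (LG * dist) by ring.
exact: leibniz_difference K1 (GN_norm rho_in) (KN_norm rho'_in) G1.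
Qed.

Lemma mul_shift_lipschitz_est :
  `|KN N rho * GN N rho - KN N (Defs.shift rho) * GN N (Defs.shift rho)
    - KN N rho' * GN N rho' + KN N (Defs.shift rho') * GN N (Defs.shift rho')|
    <= (h * dist + h ^+ 2) * mul_Gam rmax.
Proof.
have [_ [K2 _]] := KN_est N_gt2 rmin_gt0 rmin_le_rmax rho_in rho'_in.
have [G1 [G2 _]] := GN_est N_gt2 rmin_gt0 rmin_le_rmax rho_in rho'_in.
apply: le_trans (leibniz_mixed_difference K2 (GN_norm rho_in) (KN_incr rho'_in) G1
  (approx_lipschitz_shift LK_ge0 KN_est N_gt2 rmin_gt0 rmin_le_rmax rho_in rho'_in)
  (GN_incr rho_in) (KN_norm (shift'_in 1)) G2) _.
have : 0 <= h ^+ 2 * ((cK * LG + LK * cG) * rmax).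
  by rewrite !mulr_ge0 ?exprn_ge0 ?addr_ge0 ?mulr_ge0.
rewrite /mul_Gam; lra.
Qed.

Lemma mul_increment_est :
  - ((vG * cK + vK * cG) * h * (rmax - rho_at rho 0))
      <= KN N (Defs.shift rho) * GN N (Defs.shift rho) - KN N rho * GN N rho
  /\ KN N (Defs.shift rho) * GN N (Defs.shift rho) - KN N rho * GN N rho
      <= (vG * cK + vK * cG) * h * (rho_at rho 0 - rmin).
Proof.
have [_ [_ [K3 _]]] := KN_est N_gt2 rmin_gt0 rmin_le_rmax rho_in rho_in.
have [_ [_ [G3 _]]] := GN_est N_gt2 rmin_gt0 rmin_le_rmax rho_in rho_in.
have /andP[rho0_ge rho0_le] := rho_at_bounded 0 (ltnW (ltnW N_gt2)) rho_in.
have [||||lo hi] := leibniz_increment K3 (approx_range GN_range N_gt2 rmin_gt0 (shift_in 1))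
  G3 (approx_range KN_range N_gt2 rmin_gt0 rho_in); rewrite ?mulr_ge0 ?subr_ge0 //.
by split; lra.
Qed.

Lemma mul_second_difference_est :
  `|2 * (KN N (Defs.shift rho) * GN N (Defs.shift rho)) - KN N rho * GN N rho
    - KN N (shiftk 2 rho) * GN N (shiftk 2 rho)|
    <= h ^+ 2 * (mul_gam rmax + (vG * CK + vK * CG) * Y).
Proof.
have [_ [_ [_ [K4 _]]]] := KN_est N_gt2 rmin_gt0 rmin_le_rmax rho_in rho_in.
have [_ [_ [_ [G4 _]]]] := GN_est N_gt2 rmin_gt0 rmin_le_rmax rho_in rho_in.
have K_incr2 : `|KN N (shiftk 2 rho) - KN N rho| <= cK * h * rmax + cK * h * rmax.
  by apply: (ler_normD_split _ _ (KN_incr (shift_in 1)) (KN_incr rho_in)); ring.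
apply: le_trans (leibniz_second_difference K4 (GN_norm (shift_in 1)) (KN_norm (shift_in 2)) G4
  K_incr2 (GN_incr rho_in)) _.
by rewrite /mul_gam; lra.
Qed.

Lemma mul_third_difference_est :
  `|3 * (KN N (Defs.shift rho) * GN N (Defs.shift rho))
    + KN N (shiftk 3 rho) * GN N (shiftk 3 rho) - KN N rho * GN N rho
    - 3 * (KN N (shiftk 2 rho) * GN N (shiftk 2 rho))|
    <= h ^+ 3 * (mul_W (rmax + Y) + (vG * CK + vK * CG) * Phi).
Proof.
have [_ [_ [_ [K4 [K5 _]]]]] := KN_est N_gt2 rmin_gt0 rmin_le_rmax rho_in rho_in.
have [_ [_ [_ [_ [G5 _]]]]] := GN_est N_gt2 rmin_gt0 rmin_le_rmax rho_in rho_in.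
have G4 := approx_second_difference_shift CG_ge0 GN_est N_gt2 rmin_gt0 rmin_le_rmax rho_in.
apply: le_trans (leibniz_third_difference (KN_norm rho_in) G5 (KN_incr rho_in) G4 K4
  (GN_incr (shift_in 2)) K5 (GN_norm (shift_in 3))) _.
have grow (g : R -> R) (C0 c0 : R) : nondec_nonneg g -> 0 <= C0 -> 0 <= c0 ->
    h ^+ 3 * (3 * c0) * (rmax * (g rmax + C0 * Y))
    <= h ^+ 3 * (3 * c0) * ((rmax + Y) * (g (rmax + Y) + C0 * (rmax + Y))).
  move=> [g_ge0 g_nd] C0_ge0 c0_ge0; have Y_ge0 : 0 <= Y := supn_ge0 _.
  rewrite ler_wpM2l ?mulr_ge0 ?exprn_ge0 // ler_pM ?addr_ge0 ?mulr_ge0 ?g_ge0 ?lerDl //.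
  by rewrite lerD ?ler_wpM2l ?lerDr ?g_nd ?lerDl.
have := grow _ _ _ gG_nn CG_ge0 cK_ge0; have := grow _ _ _ gK_nn CK_ge0 cG_ge0.
rewrite /mul_W; lra.
Qed.

Lemma mul_consistency_est (i : 'I_N) :
  `|K (PN rho) (i%:R * h) * G (PN rho) (i%:R * h)
    - KN N (shiftk i rho) * GN N (shiftk i rho)| <= h * (vG * SK + vK * SG) * rmax.
Proof.
have [_ [_ [_ [_ [_ K6]]]]] := KN_est N_gt2 rmin_gt0 rmin_le_rmax rho_in rho_in.
have [_ [_ [_ [_ [_ G6]]]]] := GN_est N_gt2 rmin_gt0 rmin_le_rmax rho_in rho_in.
have rho_gt0 j : 0 < rho j by have /andP[+ _] := rho_in j; exact: lt_le_trans.
have /andP[G_ge0 G_le] := G_range (PN_Per (ltnW (ltnW N_gt2)) rho_gt0) (i%:R * h).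
have -> : h * (vG * SK + vK * SG) * rmax = h * SK * rmax * vG + vK * (h * SG * rmax) by ring.
by apply: leibniz_difference (K6 i) _ (KN_norm (shift_in i)) (G6 i); rewrite ger0_norm.
Qed.

End FixedGrid.

Lemma discrete_estimates_mul :
  discrete_estimates (fun rho x => K rho x * G rho x) (fun N rho => KN N rho * GN N rho)
    (vG * LK + vK * LG) (vG * cK + vK * cG) (vG * CK + vK * CG) (vG * SK + vK * SG)
    mul_gam mul_Gam mul_W.
Proof.
move=> N rmin rmax rho rho' N_gt2 rmin_gt0 rmin_le_rmax rho_in rho'_in.
split; [|split; [|split; [|split; [|split]]]].
- exact: mul_lipschitz_est N_gt2 rmin_gt0 rmin_le_rmax rho_in rho'_in.
- exact: mul_shift_lipschitz_est N_gt2 rmin_gt0 rmin_le_rmax rho_in rho'_in.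
- exact: mul_increment_est N_gt2 rmin_gt0 rmin_le_rmax rho_in.
- exact: mul_second_difference_est N_gt2 rmin_gt0 rmin_le_rmax rho_in.
- exact: mul_third_difference_est N_gt2 rmin_gt0 rmin_le_rmax rho_in.
- exact: mul_consistency_est N_gt2 rmin_gt0 rmin_le_rmax rho_in.
Qed.

End ProductEstimates.

Section SmoothApproximation.
Variable R : realType.
Implicit Types K G : (R -> R) -> (R -> R).
Implicit Types KN GN : forall N : nat, ('I_N -> R) -> R.

Lemma smoothly_approximates_add K G KN GN :
  smoothly_approximates K KN -> smoothly_approximates G GN ->
  smoothly_approximates (fun rho x => K rho x + G rho x) (fun N rho => KN N rho + GN N rho).
Proof.
move=> [K_val [K_cont [KN_ge0 [vK vK_gt0 [K_range [KN_le [LK [cK [CK [SK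
  [[LK_ge0 cK_ge0 CK_ge0 SK_ge0] [gK [GK [WK [[gK_nn GK_nn WK_nn] KN_est]]]]]]]]]]]]]]].
move=> [G_val [G_cont [GN_ge0 [vG vG_gt0 [G_range [GN_le [LG [cG [CG [SG
  [[LG_ge0 cG_ge0 CG_ge0 SG_ge0] [gG [GG [WG [[gG_nn GG_nn WG_nn] GN_est]]]]]]]]]]]]]]].
split.
  move=> rho rho_Per; have [K_c K_p] := K_val rho rho_Per; have [G_c G_p] := G_val rho rho_Per.
  by split=> x; [exact: continuousD (K_c x) (G_c x) | rewrite K_p G_p].
split; first exact: sup_continuous_on_Per_add.
split; first by move=> N rho N_gt2; rewrite addr_ge0 ?KN_ge0 ?GN_ge0.
exists (vK + vG); first exact: addr_gt0.
split.
  move=> rho rho_Per x; have /andP[K_ge0 K_le] := K_range rho rho_Per x.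
  by have /andP[G_ge0 G_le] := G_range rho rho_Per x; rewrite addr_ge0 ?lerD.
split; first by move=> N rho N_gt2 rho_ge0; rewrite lerD ?KN_le ?GN_le.
exists (LK + LG), (cK + cG), (CK + CG), (SK + SG).
split; first by split; exact: addr_ge0.
exists (fun r => gK r + gG r), (fun r => GK r + GG r), (fun r => WK r + WG r).
split; first by split; exact: nondec_nonneg_add.
exact: discrete_estimates_add.
Qed.

Lemma smoothly_approximates_scale lam K KN : 0 <= lam ->
  smoothly_approximates K KN ->
  smoothly_approximates (fun rho x => lam * K rho x) (fun N rho => lam * KN N rho).
Proof.
move=> lam_ge0 [K_val [K_cont [KN_ge0 [vK vK_gt0 [K_range [KN_le [LK [cK [CK [SK
  [[LK_ge0 cK_ge0 CK_ge0 SK_ge0] [gK [GK [WK [[gK_nn GK_nn WK_nn] KN_est]]]]]]]]]]]]]]].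
split.
  move=> rho rho_Per; have [K_c K_p] := K_val rho rho_Per; split=> x; last by rewrite K_p.
  have lam_c : {for x, continuous (fun _ : R => lam)} by exact: cvg_cst.
  exact: continuousM lam_c (K_c x).
split; first exact: sup_continuous_on_Per_scale.
split; first by move=> N rho N_gt2; rewrite mulr_ge0 ?KN_ge0.
have lamvK_ge0 : 0 <= lam * vK by rewrite mulr_ge0 // ltW.
exists (lam * vK + 1); first by rewrite ltr_pwDr.
split.
  move=> rho rho_Per x; have /andP[K_ge0 K_le] := K_range rho rho_Per x.
  by rewrite mulr_ge0 //= ler_wpDr // ler_wpM2l.
split; first by move=> N rho N_gt2 rho_ge0; rewrite ler_wpDr // ler_wpM2l ?KN_le.
exists (lam * LK), (lam * cK), (lam * CK), (lam * SK).
split; first by split; exact: mulr_ge0.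
exists (fun r => lam * gK r), (fun r => lam * GK r), (fun r => lam * WK r).
split; first by split; exact: nondec_nonneg_scale.
exact: discrete_estimates_scale.
Qed.

Lemma smoothly_approximates_mul K G KN GN :
  smoothly_approximates K KN -> smoothly_approximates G GN ->
  smoothly_approximates (fun rho x => K rho x * G rho x) (fun N rho => KN N rho * GN N rho).
Proof.
move=> [K_val [K_cont [KN_ge0 [vK vK_gt0 [K_range [KN_le [LK [cK [CK [SK
  [[LK_ge0 cK_ge0 CK_ge0 SK_ge0] [gK [GK [WK [[gK_nn GK_nn WK_nn] KN_est]]]]]]]]]]]]]]].
move=> [G_val [G_cont [GN_ge0 [vG vG_gt0 [G_range [GN_le [LG [cG [CG [SG
  [[LG_ge0 cG_ge0 CG_ge0 SG_ge0] [gG [GG [WG [[gG_nn GG_nn WG_nn] GN_est]]]]]]]]]]]]]]].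
split.
  move=> rho rho_Per; have [K_c K_p] := K_val rho rho_Per; have [G_c G_p] := G_val rho rho_Per.
  by split=> x; [exact: continuousM (K_c x) (G_c x) | rewrite K_p G_p].
split; first exact: sup_continuous_on_Per_mul vK_gt0 vG_gt0 K_range G_range K_cont G_cont.
split; first by move=> N rho N_gt2; rewrite mulr_ge0 ?KN_ge0 ?GN_ge0.
exists (vK * vG); first exact: mulr_gt0.
split.
  move=> rho rho_Per x; have /andP[K_ge0 K_le] := K_range rho rho_Per x.
  by have /andP[G_ge0 G_le] := G_range rho rho_Per x; rewrite mulr_ge0 ?ler_pM.
split; first by move=> N rho N_gt2 rho_ge0; rewrite ler_pM ?KN_ge0 ?GN_ge0 ?KN_le ?GN_le.
have KN_range N rho (N_gt2 : (2 < N)%N) (rho_ge0 : forall i, 0 <= rho i) :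
  0 <= KN N rho <= vK by rewrite KN_ge0 ?KN_le.
have GN_range N rho (N_gt2 : (2 < N)%N) (rho_ge0 : forall i, 0 <= rho i) :
  0 <= GN N rho <= vG by rewrite GN_ge0 ?GN_le.
have [vK_ge0 vG_ge0] := (ltW vK_gt0, ltW vG_gt0).
exists (vG * LK + vK * LG), (vG * cK + vK * cG), (vG * CK + vK * CG), (vG * SK + vK * SG).
split; first by split; rewrite addr_ge0 ?mulr_ge0.
exists (mul_gam vK cK vG cG gK gG), (mul_Gam vK LK cK vG LG cG GK GG),
  (mul_W vK cK CK vG cG CG gK WK gG WG).
split; first by split; [exact: nondec_nonneg_mul_gam | exact: nondec_nonneg_mul_Gam
  | exact: nondec_nonneg_mul_W].
exact: discrete_estimates_mul.
Qed.

End SmoothApproximation.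

Unset Implicit Arguments.

Theorem lemma2p2 (R : realType) (K G : (R -> R) -> (R -> R))
    (KN GN : forall N : nat, ('I_N -> R) -> R) (lam : R) :
  (forall rho, Per rho -> Per (K rho)) ->
  (forall rho, Per rho -> Per (G rho)) ->
  smoothly_approximates K KN ->
  smoothly_approximates G GN ->
  0 <= lam ->
  [/\ smoothly_approximates (fun rho x => K rho x * G rho x)
        (fun N rho => KN N rho * GN N rho),
      smoothly_approximates (fun rho x => K rho x + G rho x)
        (fun N rho => KN N rho + GN N rho) &
      smoothly_approximates (fun rho x => lam * K rho x)
        (fun N rho => lam * KN N rho)].
Proof.
move=> _ _ K_approx G_approx lam_ge0; split.
- exact: smoothly_approximates_mul.
- exact: smoothly_approximates_add.
- exact: smoothly_approximates_scale.
Qed.
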